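(* Let $A\subseteq\mathcal{R}$ be outer measurable and let $(I_n)_{n\ge1}$ be pairwise disjoint intervals in $\mathcal{R}$ with $A\cap I_n=\emptyset$ for every $n$ and $\lim_{n\to\infty}l(I_n)=0$. Then $A\cup\bigcup_{n=1}^\infty I_n$ is outer measurable and $$M_u\Big(A\cup\bigcup_{n=1}^\infty I_n\Big)=M_u(A)+\sum_{n=1}^\infty l(I_n).$$
   Context: $\mathcal{R}$ denotes the Levi-Civita field: functions $x:\mathbb{Q}\to\mathbb{R}$ with left-finite support, with componentwise addition and formal power series multiplication, ordered by $x>0$ iff $x\ne0$ and $x[\min\operatorname{supp}x]>0$; it is a non-Archimedean ordered field extension of $\mathbb{R}$, Cauchy complete in the order topology, in which all limits and series are taken (a series $\sum a_n$ converges iff $a_n\to0$). An interval is a set $[a,b],[a,b),(a,b]$ or $(a,b)$ with $a<b$ in $\mathcal{R}$, of length $l=b-a$. A cover of $A\subseteq\mathcal{R}$ is a sequence of intervals $(S_n)_{n\ge1}$ with $A\subseteq\bigcup_n S_n$ and $\sum_n l(S_n)$ convergent in $\mathcal{R}$. $A$ is called outer measurable if the infimum $\inf\{\sum_n l(S_n): (S_n)\text{ a cover of }A\}$ exists in $\mathcal{R}$; this infimum is then called the outer measure $M_u(A)$. *)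

From HB Require Import structures.
From mathcomp Require Import all_boot all_order all_algebra.
From mathcomp Require Import boolp classical_sets functions cardinality.
From mathcomp Require Import reals Rstruct.
From Stdlib Require Import Rdefinitions.
Set Implicit Arguments. Unset Strict Implicit. Unset Printing Implicit Defensive.
Import Order.TTheory GRing.Theory Num.Theory.
Local Open Scope classical_set_scope.
Local Open Scope ring_scope.

Notation RR := Rdefinitions.R.

(* ---------------- The Levi-Civita field (additive/order structure) --------
   Elements: functions x : Q -> R with left-finite support, i.e. for every
   q : Q the set {p in supp x | p < q} is finite. *)
Definition left_finite (f : rat -> RR) : Prop :=
  forall q : rat, finite_set [set p : rat | f p != 0 /\ p < q].

Record LC := MkLC { lcf :> rat -> RR ; lcfP : left_finite lcf }.

Lemma left_finite0 : left_finite (fun _ => 0).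
Proof.
move=> q; apply: (sub_finite_set _ (finite_set0 rat)).
by move=> p /= []; rewrite eqxx.
Qed.

Lemma left_finiteD (f g : rat -> RR) :
  left_finite f -> left_finite g -> left_finite (fun p => f p + g p).
Proof.
move=> hf hg q.
apply: (@sub_finite_set _ _ ([set p | f p != 0 /\ p < q] `|` [set p | g p != 0 /\ p < q]));
  last by rewrite finite_setU; split.
move=> p /= [hp pq]; case: (eqVneq (f p) 0) => fp; last by left.
by right; split=> //; move: hp; rewrite fp add0r.
Qed.

Lemma left_finiteN (f : rat -> RR) : left_finite f -> left_finite (fun p => - f p).
Proof.
move=> hf q; apply: (sub_finite_set _ (hf q)).
by move=> p /= [hp pq]; split=> //; rewrite -oppr_eq0.
Qed.

Definition LC0 : LC := MkLC left_finite0.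
Definition LCadd (x y : LC) : LC := MkLC (left_finiteD (lcfP x) (lcfP y)).
Definition LCopp (x : LC) : LC := MkLC (left_finiteN (lcfP x)).
Definition LCsub (x y : LC) : LC := LCadd x (LCopp y).

(* x < y  iff  y - x > 0  iff  (y - x)[min supp (y - x)] > 0, i.e. at the
   first rational q where x and y differ, x q < y q. *)
Definition LClt (x y : LC) : Prop :=
  exists q : rat, x q < y q /\ (forall p : rat, p < q -> x p = y p).
Definition LCle (x y : LC) : Prop := x = y \/ LClt x y.

Definition LCcvg (u : nat -> LC) (l : LC) : Prop :=
  forall a b : LC, LClt a l -> LClt l b ->
    exists N : nat, forall n : nat, leq N n -> LClt a (u n) /\ LClt (u n) b.

Fixpoint LCpsum (u : nat -> LC) (n : nat) : LC :=
  match n with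
  | 0 => LC0
  | n'.+1 => LCadd (LCpsum u n') (u n')
  end.

Definition LCseries (u : nat -> LC) (s : LC) : Prop := LCcvg (LCpsum u) s.

Inductive ikind := CC | CO | OC | OO.

Record LCinterval := MkInterval {
  ileft : LC ; iright : LC ; ikd : ikind ; iltP : LClt ileft iright }.

Definition iset (I : LCinterval) : set LC :=
  match ikd I with
  | CC => [set x | LCle (ileft I) x /\ LCle x (iright I)]
  | CO => [set x | LCle (ileft I) x /\ LClt x (iright I)]
  | OC => [set x | LClt (ileft I) x /\ LCle x (iright I)]
  | OO => [set x | LClt (ileft I) x /\ LClt x (iright I)]
  end.

Definition ilen (I : LCinterval) : LC := LCsub (iright I) (ileft I).

Definition cover_with_sum (A : set LC) (S : nat -> LCinterval) (s : LC) : Prop :=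
  A `<=` \bigcup_n iset (S n) /\ LCseries (fun n => ilen (S n)) s.

Definition cover_sums (A : set LC) : set LC :=
  [set s | exists S : nat -> LCinterval, cover_with_sum A S s].

Definition is_inf (E : set LC) (m : LC) : Prop :=
  (forall s, E s -> LCle m s) /\
  (forall m', (forall s, E s -> LCle m' s) -> LCle m' m).

Definition outer_measure_is (A : set LC) (m : LC) : Prop := is_inf (cover_sums A) m.
Definition outer_measurable (A : set LC) : Prop := exists m, outer_measure_is A m.

From HB Require Import structures.
From mathcomp Require Import all_boot all_order all_algebra.
From mathcomp Require Import boolp classical_sets functions cardinality.
From mathcomp Require Import reals Rstruct ring.
Set Implicit Arguments. Unset Strict Implicit. Unset Printing Implicit Defensive.
Import Order.TTheory GRing.Theory Num.Theory.
Local Open Scope classical_set_scope.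
Local Open Scope ring_scope.

(* The easy inequality comes from interleaving a cover of [A] with the intervals [I n]. For the
   other one, a cover of [A `|` \bigcup_n I n] of total length [s] can be turned, at an
   arbitrarily small extra cost, into a cover of the same set minus one [I n] whose total length
   decreased by [ilen (I n)]; removing [I 0], ..., [I (N - 1)] leaves a cover of [A] of length
   about [s - \sum_(n < N) ilen (I n)], whence [M_u(A) + \sum_n ilen (I n) <= s].
   The removal step rests on a substitute for the Heine-Borel property, which fails in the
   Levi-Civita field: if countably many closed intervals cover [(a, b)], their lengths add up to
   at least [b - a]. Otherwise one builds nested intervals, the n-th avoiding the first n covering
   intervals, whose lengths are bounded by the tails of the length series and so tend to 0; by
   Cauchy completeness they share a point, which no covering interval contains. *)

Lemma LC_ext (x y : LC) : (forall q, x q = y q) -> x = y.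
Proof.
case: x y => f hf [g hg] /= h; have ef : f = g by apply: funext.
by subst g; rewrite (Prop_irrelevance hf hg).
Qed.

Lemma LCaddA : associative LCadd.
Proof. by move=> x y z; apply: LC_ext => q /=; rewrite addrA. Qed.
Lemma LCaddC : commutative LCadd.
Proof. by move=> x y; apply: LC_ext => q /=; rewrite addrC. Qed.
Lemma LCadd0 : left_id LC0 LCadd.
Proof. by move=> x; apply: LC_ext => q /=; rewrite add0r. Qed.
Lemma LCaddN : left_inverse LC0 LCopp LCadd.
Proof. by move=> x; apply: LC_ext => q /=; rewrite addNr. Qed.

HB.instance Definition _ := gen_eqMixin LC.
HB.instance Definition _ := gen_choiceMixin LC.
HB.instance Definition _ := GRing.isZmodule.Build LC LCaddA LCaddC LCadd0 LCaddN.

Lemma lcfD (x y : LC) q : (x + y) q = x q + y q. Proof. by []. Qed.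
Lemma lcfN (x : LC) q : (- x) q = - x q. Proof. by []. Qed.
Lemma lcfB (x y : LC) q : (x - y) q = x q - y q. Proof. by []. Qed.
Lemma lcf0 q : (0 : LC) q = 0. Proof. by []. Qed.

Ltac lc_ring := apply: LC_ext => ?; rewrite ?(lcfD, lcfN, lcfB, lcf0) /=; ring.

(** * The order of the Levi-Civita field *)

Lemma LC_first_diff (x y : LC) : x <> y ->
  exists q, x q <> y q /\ forall p, p < q -> x p = y p.
Proof.
move=> nxy; have [q0 xy0] : exists q0, x q0 <> y q0.
  by apply: contrapT => /forallNP h; apply: nxy; apply: LC_ext => q; apply: contrapT.
have diffE p : (x - y) p != 0 <-> x p <> y p.
  by rewrite lcfB subr_eq0; split=> [/eqP|/eqP].
have [s es] := (finite_seqP _).1 (lcfP (x - y) (q0 + 1)).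
pose m := \big[Order.min/q0]_(p <- s) p.
have mq0 : m < q0 + 1.
  by apply: (@le_lt_trans _ _ q0); [exact: bigmin_le_id|rewrite ltrDl].
exists m; split.
  apply/diffE; rewrite /m big_seq; apply: (big_ind (fun p => (x - y) p != 0)) => [|a b da db|p ps].
  - exact/diffE.
  - by case: (leP a b).
  - by have : [set` s] p by []; rewrite -es => -[].
move=> p pm; apply: contrapT => /diffE xyp.
have : [set` s] p by rewrite -es; split=> //; exact: lt_trans pm mq0.
by move=> /= ps; move: pm; rewrite ltNge (ge_bigmin_seq q0 p xpredT id ps).
Qed.

Lemma LClt_irr (x : LC) : ~ LClt x x.
Proof. by case=> q []; rewrite ltxx. Qed.

Lemma LClt_trans (x y z : LC) : LClt x y -> LClt y z -> LClt x z.
Proof.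
move=> [q1 [h1 e1]] [q2 [h2 e2]].
case: (ltgtP q1 q2) => hq.
- exists q1; split; first by rewrite -(e2 _ hq).
  by move=> p hp; rewrite e1 // e2 //; exact: lt_trans hp hq.
- exists q2; split; first by rewrite (e1 _ hq).
  by move=> p hp; rewrite e1 ?e2 //; exact: lt_trans hp hq.
- subst q2; exists q1; split; first exact: lt_trans h1 h2.
  by move=> p hp; rewrite e1 ?e2.
Qed.

Lemma LClt_total (x y : LC) : x <> y -> LClt x y \/ LClt y x.
Proof.
move=> /LC_first_diff [q [hq e]]; case: (ltgtP (x q) (y q)) => h.
- by left; exists q.
- by right; exists q; split=> // p hp; rewrite e.
- by case: hq.
Qed.

Definition LCltb (x y : LC) : bool := `[< LClt x y >].
Definition LCleb (x y : LC) : bool := (x == y) || LCltb x y.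

Lemma LCltb_irr : irreflexive LCltb.
Proof. by move=> x; apply/asboolP; exact: LClt_irr. Qed.
Lemma LCltb_trans : transitive LCltb.
Proof. by move=> y x z /asboolP h1 /asboolP h2; apply/asboolP; exact: LClt_trans h1 h2. Qed.

HB.instance Definition _ := Order.LtLe_isPOrder.Build ring_display LC
  (le := LCleb) (lt := LCltb) (fun x y => erefl) LCltb_irr LCltb_trans.

Lemma LCltP (x y : LC) : LClt x y <-> x < y.
Proof. by split=> [h|]; [apply/asboolP|move/asboolP]. Qed.

Lemma LCle_total : total (<=%O : rel LC).
Proof.
move=> x y; rewrite !le_eqVlt; case: (eqVneq x y) => //= /eqP nxy.
by case: (LClt_total nxy) => /LCltP ->; rewrite ?orbT.
Qed.

HB.instance Definition _ := Order.POrder_isTotal.Build ring_display LC LCle_total.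

Lemma LCleP (x y : LC) : LCle x y <-> x <= y.
Proof.
split; first by case=> [->|/LCltP h]; [exact: lexx|exact: ltW].
by rewrite le_eqVlt => /orP[/eqP->|/LCltP h]; [left|right].
Qed.

Lemma LC_ltrD2r (z x y : LC) : (x + z < y + z) = (x < y).
Proof.
apply/idP/idP => /LCltP [q [h e]]; apply/LCltP; exists q.
  split; first by move: h; rewrite !lcfD ltrD2r.
  by move=> p hp; move: (e p hp); rewrite !lcfD => /addIr.
split; first by rewrite !lcfD ltrD2r.
by move=> p hp; rewrite !lcfD e.
Qed.

Lemma LC_lerD2r (z x y : LC) : (x + z <= y + z) = (x <= y).
Proof. by rewrite !leNgt LC_ltrD2r. Qed.
Lemma LC_ltrD2l (z x y : LC) : (z + x < z + y) = (x < y).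
Proof. by rewrite ![z + _]addrC LC_ltrD2r. Qed.
Lemma LC_lerD2l (z x y : LC) : (z + x <= z + y) = (x <= y).
Proof. by rewrite ![z + _]addrC LC_lerD2r. Qed.

Lemma LC_subr_ge0 (x y : LC) : (0 <= y - x) = (x <= y).
Proof. by rewrite -(LC_lerD2r x 0 (y - x)) subrK add0r. Qed.
Lemma LC_subr_gt0 (x y : LC) : (0 < y - x) = (x < y).
Proof. by rewrite -(LC_ltrD2r x 0 (y - x)) subrK add0r. Qed.

Lemma LC_lerD (x y z w : LC) : x <= y -> z <= w -> x + z <= y + w.
Proof.
by move=> h1 h2; apply: (@le_trans _ _ (y + z)); rewrite ?LC_lerD2r ?LC_lerD2l.
Qed.
Lemma LC_ltr_leD (x y z w : LC) : x < y -> z <= w -> x + z < y + w.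
Proof.
by move=> h1 h2; apply: (@lt_le_trans _ _ (y + z)); rewrite ?LC_ltrD2r ?LC_lerD2l.
Qed.
Lemma LC_addr_ge0 (x y : LC) : 0 <= x -> 0 <= y -> 0 <= x + y.
Proof. by move=> h1 h2; rewrite -(addr0 0); exact: LC_lerD. Qed.
Lemma LC_lerDl (x y : LC) : (x <= x + y) = (0 <= y).
Proof. by rewrite -{1}(addr0 x) LC_lerD2l. Qed.
Lemma LC_ltrDl (x y : LC) : (x < x + y) = (0 < y).
Proof. by rewrite -{1}(addr0 x) LC_ltrD2l. Qed.
Lemma LC_lerN2 (x y : LC) : (- x <= - y) = (y <= x).
Proof. by rewrite -(LC_lerD2r (x + y) (- x) (- y)) addKr (addrC x y) addKr. Qed.
Lemma LC_ltrN2 (x y : LC) : (- x < - y) = (y < x).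
Proof. by rewrite !ltNge LC_lerN2. Qed.
Lemma LC_oppr_ge0 (x : LC) : (0 <= - x) = (x <= 0).
Proof. by rewrite -LC_subr_ge0 sub0r. Qed.
Lemma LC_lerBl (x y : LC) : (x - y <= x) = (0 <= y).
Proof. by rewrite -{2}(subr0 x) LC_lerD2l LC_lerN2. Qed.
Lemma LC_ltrBl (x y : LC) : (x - y < x) = (0 < y).
Proof. by rewrite -{2}(subr0 x) LC_ltrD2l LC_ltrN2. Qed.

Lemma left_finite_scale (r : RR) (x : LC) : left_finite (fun q => r * x q).
Proof.
move=> q; apply: (sub_finite_set _ (lcfP x q)).
by move=> p /= [h1 h2]; split=> //; apply: contraNneq h1 => ->; rewrite mulr0.
Qed.

Definition LChalf (x : LC) : LC := MkLC (left_finite_scale 2^-1 x).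

Lemma LChalf_gt0 (x : LC) : 0 < x -> 0 < LChalf x.
Proof.
move=> /LCltP [q [h e]]; apply/LCltP; exists q; split.
  by move: h; rewrite lcf0 /= => h; rewrite mulr_gt0 // invr_gt0 ltr0n.
by move=> p hp; rewrite /= -(e p hp) lcf0 mulr0.
Qed.

Lemma LChalfK (x : LC) : LChalf x + LChalf x = x.
Proof. by apply: LC_ext => q; rewrite lcfD /=; field. Qed.

(** * Convergence as eventual agreement of coefficients *)

Lemma left_finite_delta (q : rat) : left_finite (fun p => if p == q then (1 : RR) else 0).
Proof.
move=> r; apply: (sub_finite_set _ (finite_set1 q)).
by move=> p /= []; case: (eqVneq p q) => [-> //|_]; rewrite eqxx.
Qed.

Definition delta (q : rat) : LC := MkLC (left_finite_delta q).

Lemma deltaE q p : delta q p = if p == q then 1 else 0. Proof. by []. Qed.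

Lemma delta_gt0 q : 0 < delta q.
Proof.
apply/LCltP; exists q; split; first by rewrite deltaE eqxx lcf0 ltr01.
by move=> p hp; rewrite deltaE lcf0 (lt_eqF hp).
Qed.

Definition agree (x y : LC) (q : rat) := forall p, p <= q -> x p = y p.

Lemma agree_sym x y q : agree x y q -> agree y x q.
Proof. by move=> h p hp; rewrite h. Qed.

Lemma agree_le x y q q' : q' <= q -> agree x y q -> agree x y q'.
Proof. by move=> hq h p hp; apply: h; exact: le_trans hp hq. Qed.

Definition cvg_agree (u : nat -> LC) (L : LC) :=
  forall q : rat, exists N : nat, forall n : nat, (N <= n)%N -> agree (u n) L q.

Lemma between_agree (a v b : LC) (r : rat) :
  LClt a v -> LClt v b -> (forall p, p < r -> a p = b p) ->
  forall p, p < r -> v p = a p.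
Proof.
move=> [q1 [h1 e1]] [q2 [h2 e2]] eab.
suff hq1 : r <= q1 by move=> p hp; rewrite e1 //; exact: lt_le_trans hp hq1.
rewrite leNgt; apply/negP => hq1.
case: (ltgtP q1 q2) => hq.
- by move: h1; rewrite (e2 _ hq) -eab // ltxx.
- by move: h2; rewrite -(e1 _ hq) eab ?ltxx //; exact: lt_trans hq hq1.
- by subst q2; move: (lt_trans h1 h2); rewrite eab // ltxx.
Qed.

Lemma lt_agree_stable (a L : LC) : LClt a L ->
  exists q, forall x, agree x L q -> LClt a x.
Proof.
move=> [q [h e]]; exists q => x hx; exists q; split; first by rewrite hx.
by move=> p hp; rewrite e // hx //; exact: ltW.
Qed.

Lemma gt_agree_stable (b L : LC) : LClt L b ->
  exists q, forall x, agree x L q -> LClt x b.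
Proof.
move=> [q [h e]]; exists q => x hx; exists q; split; first by rewrite hx.
by move=> p hp; rewrite -e // hx //; exact: ltW.
Qed.

(* [L -+ delta (q + 1)] agree with [L] strictly below [q + 1]; anything in between then agrees with
   [L] up to [q]. *)
Lemma LCcvgP (u : nat -> LC) (L : LC) : LCcvg u L <-> cvg_agree u L.
Proof.
split=> [h q|h a b aL Lb].
  have dq p : p < q + 1 -> delta (q + 1) p = 0 by move=> hp; rewrite deltaE (lt_eqF hp).
  have aL : LClt (L - delta (q + 1)) L.
    exists (q + 1); split; first by rewrite lcfB deltaE eqxx gtrBl ltr01.
    by move=> p hp; rewrite lcfB dq ?subr0.
  have Lb : LClt L (L + delta (q + 1)).
    exists (q + 1); split; first by rewrite lcfD deltaE eqxx ltrDl ltr01.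
    by move=> p hp; rewrite lcfD dq ?addr0.
  have [N hN] := h _ _ aL Lb; exists N => n /hN [h1 h2] p hp.
  have hp' : p < q + 1 by apply: le_lt_trans hp _; rewrite ltrDl ltr01.
  rewrite (between_agree h1 h2 _ hp') ?lcfB ?dq ?subr0 // => p' hp''.
  by rewrite lcfB lcfD dq ?subr0 ?addr0.
have [q1 h1] := lt_agree_stable aL; have [q2 h2] := gt_agree_stable Lb.
have [N hN] := h (Num.max q1 q2); exists N => n /hN hn; split.
  by apply: h1; apply: agree_le hn; rewrite le_max lexx.
by apply: h2; apply: agree_le hn; rewrite le_max lexx orbT.
Qed.

Lemma cvg_agree_unique u L1 L2 : cvg_agree u L1 -> cvg_agree u L2 -> L1 = L2.
Proof.
move=> h1 h2; apply: LC_ext => q.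
have [N1 hN1] := h1 q; have [N2 hN2] := h2 q.
rewrite -(hN1 (maxn N1 N2) (leq_maxl _ _) q (lexx _)).
by rewrite (hN2 (maxn N1 N2) (leq_maxr _ _) q (lexx _)).
Qed.

Lemma cvg_agreeD u v a b :
  cvg_agree u a -> cvg_agree v b -> cvg_agree (fun n => u n + v n) (a + b).
Proof.
move=> h1 h2 q; have [N1 hN1] := h1 q; have [N2 hN2] := h2 q.
exists (maxn N1 N2) => n; rewrite geq_max => /andP[n1 n2] p hp.
by rewrite !lcfD (hN1 n n1 p hp) (hN2 n n2 p hp).
Qed.

Lemma cvg_agreeN u a : cvg_agree u a -> cvg_agree (fun n => - u n) (- a).
Proof. by move=> h q; have [N hN] := h q; exists N => n hn p hp; rewrite !lcfN hN. Qed.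

Lemma cvg_agree_ge u L a N0 :
  cvg_agree u L -> (forall n, (N0 <= n)%N -> a <= u n) -> a <= L.
Proof.
move=> /LCcvgP h ha; rewrite leNgt; apply/negP => /LCltP La.
have lL : LClt (L - delta 0) L by apply/LCltP; rewrite LC_ltrBl delta_gt0.
have [N hN] := h _ _ lL La; have [_ /LCltP] := hN (maxn N N0) (leq_maxl _ _).
by rewrite ltNge ha // leq_maxr.
Qed.

Lemma cvg_agree_le u L a N0 :
  cvg_agree u L -> (forall n, (N0 <= n)%N -> u n <= a) -> L <= a.
Proof.
move=> h ha; rewrite -LC_lerN2; apply: (cvg_agree_ge (N0 := N0) (cvg_agreeN h)).
by move=> n hn; rewrite LC_lerN2 ha.
Qed.

Lemma agree0_squeeze (x y : LC) q : 0 <= x -> x <= y -> agree y 0 q -> agree x 0 q.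
Proof.
move=> x0 xy hy p hp; apply: contrapT => hxp.
have /LCltP [q1 [h1 e1]] : 0 < x by rewrite lt_def x0 andbT; apply: contra_notN hxp => /eqP->.
have q1p : q1 <= p by rewrite leNgt; apply/negP => hpq; apply: hxp; rewrite -e1.
have hyx p' : p' <= q1 -> (y - x) p' = - x p'.
  by move=> hp'; rewrite lcfB hy ?sub0r //; exact: le_trans hp' (le_trans q1p hp).
move: xy; rewrite -LC_subr_ge0 le_eqVlt => /orP[/eqP e|/LCltP hlt].
  by move: h1; rewrite lcf0 -oppr_lt0 -(hyx q1 (lexx _)) -e lcf0 ltxx.
apply: (@LClt_irr 0); apply: (LClt_trans hlt); exists q1; split.
  by rewrite hyx // lcf0 oppr_lt0 -(lcf0 q1).
by move=> p' hp'; rewrite hyx ?ltW // -(e1 _ hp') lcf0 oppr0.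
Qed.

Lemma cvg_agree0_squeeze (a b : nat -> LC) :
  (forall n, 0 <= a n) -> (forall n, a n <= b n) -> cvg_agree b 0 -> cvg_agree a 0.
Proof.
move=> h0 h1 hb q; have [N hN] := hb q; exists N => n hn.
exact: agree0_squeeze (h0 n) (h1 n) (hN n hn).
Qed.

Lemma delta_shift_cvg0 (r : rat) : cvg_agree (fun n => delta (r + n%:R)) 0.
Proof.
move=> q; exists (Num.bound `|q - r|) => n hn p hp.
rewrite deltaE lcf0; case: eqP => // e; exfalso.
have : q - r < n%:R.
  apply: le_lt_trans (ler_norm _) _; apply: lt_le_trans (archi_boundP (normr_ge0 _)) _.
  by rewrite ler_nat.
by rewrite ltrBlDl -e ltNge hp.
Qed.

Lemma delta_nat_cvg0 : cvg_agree (fun n => delta n%:R) 0.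
Proof. by move=> q; have [N hN] := delta_shift_cvg0 0 q; exists N => n /hN; rewrite add0r. Qed.

Lemma cvg_agreeS u L : cvg_agree u L -> cvg_agree (fun n => u n.+1) L.
Proof. by move=> h q; have [N hN] := h q; exists N => n hn; apply: hN; exact: leqW. Qed.

Definition cauchy_agree (u : nat -> LC) :=
  forall q : rat, exists N : nat, forall n m : nat, (N <= n)%N -> (N <= m)%N -> agree (u n) (u m) q.

(* The limit is assembled coefficientwise: its coefficient at [p] is the stable value of
   [u n p]; left-finiteness below [q] is inherited from a single [u n]. *)
Lemma cauchy_agree_cvg u : cauchy_agree u -> exists L, cvg_agree u L.
Proof.
move=> h; have /choice [N hN] := h.
have key p q : p <= q -> u (N p) p = u (N q) p.
  move=> hpq; pose n := maxn (N p) (N q).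
  rewrite (hN p (N p) n (leqnn _) (leq_maxl _ _) p (lexx _)).
  by rewrite (hN q (N q) n (leqnn _) (leq_maxr _ _) p hpq).
have lf : left_finite (fun p => u (N p) p).
  move=> q; apply: (sub_finite_set _ (lcfP (u (N q)) q)).
  by move=> p /= [h1 h2]; split=> //; rewrite -key //; exact: ltW.
exists (MkLC lf) => q; exists (N q) => n hn p hp /=.
by rewrite (key p q hp) (hN q n (N q) hn (leqnn _) p hp).
Qed.

Lemma LCpsum0 u : LCpsum u 0 = 0. Proof. by []. Qed.
Lemma LCpsumE u n : LCpsum u n.+1 = LCpsum u n + u n. Proof. by []. Qed.

Lemma LCpsumD u v n : LCpsum (fun k => u k + v k) n = LCpsum u n + LCpsum v n.
Proof. by elim: n => [|n IH]; rewrite /= ?addr0 // IH addrACA. Qed.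

Lemma LCpsum_shift u k n :
  LCpsum u (k + n) = LCpsum u k + LCpsum (fun i => u (k + i)%N) n.
Proof. by elim: n => [|n IH]; rewrite ?addn0 /= ?addr0 // addnS /= IH addrA. Qed.

Lemma LCpsum_le u v n : (forall i, u i <= v i) -> LCpsum u n <= LCpsum v n.
Proof. by move=> h; elim: n => [|n IH] //=; exact: LC_lerD. Qed.

Lemma LCpsum_ge0 u n : (forall i, 0 <= u i) -> 0 <= LCpsum u n.
Proof. by move=> h; elim: n => [|n IH] //=; exact: LC_addr_ge0. Qed.

Lemma LCpsum_mono u m n : (forall i, 0 <= u i) -> (m <= n)%N -> LCpsum u m <= LCpsum u n.
Proof. by move=> h /subnKC <-; rewrite LCpsum_shift LC_lerDl LCpsum_ge0. Qed.

Lemma LCseries_terms0 u s : LCseries u s -> cvg_agree u 0.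
Proof.
move=> /LCcvgP h q; have [N hN] := h q; exists N => n hn p hp.
have -> : u n = LCpsum u n.+1 - LCpsum u n by rewrite LCpsumE addrC addKr.
by rewrite lcfB (hN _ (leqW hn) p hp) (hN _ hn p hp) subrr.
Qed.

(* Terms agreeing with 0 up to [q] do not change the partial sums up to [q]: the partial sums are
   Cauchy. *)
Lemma LCseries_of_terms0 u : cvg_agree u 0 -> exists s, LCseries u s.
Proof.
move=> h; suff /cauchy_agree_cvg [L hL] : cauchy_agree (LCpsum u) by exists L; apply/LCcvgP.
move=> q; have [N hN] := h q; exists N.
suff H k p : p <= q -> LCpsum u (N + k) p = LCpsum u N p.
  by move=> n m hn hm p hp; rewrite -(subnKC hn) -(subnKC hm) !H.
move=> hp; elim: k => [|k IH]; first by rewrite addn0.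
by rewrite addnS LCpsumE lcfD IH (hN (N + k)%N (leq_addr _ _) p hp) lcf0 addr0.
Qed.

Lemma LCseriesD u v a b :
  LCseries u a -> LCseries v b -> LCseries (fun n => u n + v n) (a + b).
Proof.
move=> /LCcvgP h1 /LCcvgP h2; apply/LCcvgP => q.
by have [N hN] := cvg_agreeD h1 h2 q; exists N => n hn; rewrite LCpsumD; exact: hN.
Qed.

Lemma LCseries_unique u a b : LCseries u a -> LCseries u b -> a = b.
Proof. by move=> /LCcvgP h1 /LCcvgP h2; exact: cvg_agree_unique h1 h2. Qed.

Lemma LCseries_ge_psum u s n : (forall i, 0 <= u i) -> LCseries u s -> LCpsum u n <= s.
Proof.
move=> h /LCcvgP hs; apply: (cvg_agree_ge (N0 := n) hs) => m; exact: LCpsum_mono.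
Qed.

Lemma LCseries_ge0 u s : (forall i, 0 <= u i) -> LCseries u s -> 0 <= s.
Proof. by move=> h hs; apply: le_trans (LCseries_ge_psum 0 h hs). Qed.

Lemma LCseries_agree0 (w : nat -> LC) W q :
  LCseries w W -> (forall k, agree (w k) 0 q) -> agree W 0 q.
Proof.
move=> /LCcvgP hW h; have [N hN] := hW q.
have hp n : agree (LCpsum w n) 0 q.
  by elim: n => [|n IH] p hp //; rewrite LCpsumE lcfD (IH p hp) (h n p hp) lcf0 addr0.
by move=> p hpq; rewrite -(hN N (leqnn _) p hpq) (hp N p hpq).
Qed.

Definition interleave {X : Type} (a b : nat -> X) (n : nat) : X :=
  if odd n then b n./2 else a n./2.

Lemma half_double k : (k.*2)./2 = k.
Proof. exact: (half_bit_double k false). Qed.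

Lemma LCpsum_interleave a b k :
  LCpsum (interleave a b) k.*2 = LCpsum a k + LCpsum b k /\
  LCpsum (interleave a b) k.*2.+1 = LCpsum a k.+1 + LCpsum b k.
Proof.
elim: k => [|k [IH1 IH2]]; first by split; rewrite /= /interleave /= ?add0r ?addr0.
have e1 : LCpsum (interleave a b) k.+1.*2 = LCpsum a k.+1 + LCpsum b k.+1.
  rewrite doubleS /= -/(LCpsum (interleave a b) k.*2.+1) IH2.
  by rewrite /interleave /= odd_double /= uphalf_double addrA.
split=> //; rewrite LCpsumE e1 (LCpsumE a k.+1).
by rewrite /interleave odd_double half_double addrAC.
Qed.

Lemma LCseries_interleave a b A B :
  LCseries a A -> LCseries b B -> LCseries (interleave a b) (A + B).
Proof.
move=> /LCcvgP ha /LCcvgP hb; apply/LCcvgP => q.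
have [N1 hN1] := ha q; have [N2 hN2] := hb q.
exists (maxn N1 N2).*2.+1 => n hn.
have /andP[k1 k2] : (N1 <= n./2)%N && (N2 <= n./2)%N.
  by rewrite -geq_max -(half_double (maxn _ _)) half_leq // ltnW.
have [o|o] := boolP (odd n).
  have -> : n = n./2.*2.+1 by rewrite -{1}(odd_double_half n) o.
  rewrite (LCpsum_interleave a b n./2).2 => p hp.
  by rewrite lcfD (hN1 _ (leqW k1) p hp) (hN2 _ k2 p hp).
have -> : n = n./2.*2 by rewrite -{1}(odd_double_half n) (negbTE o).
rewrite (LCpsum_interleave a b n./2).1 => p hp.
by rewrite lcfD (hN1 _ k1 p hp) (hN2 _ k2 p hp).
Qed.

(** * Lengths of intersections of closed intervals *)

Section MinMax.
Context {disp : Order.disp_t} {T : orderType disp}.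
Implicit Types x y : T.

Lemma ge_minl x y : (Order.min x y <= x)%O. Proof. by rewrite ge_min lexx. Qed.
Lemma ge_minr x y : (Order.min x y <= y)%O. Proof. by rewrite ge_min lexx orbT. Qed.
Lemma le_maxl x y : (x <= Order.max x y)%O. Proof. by rewrite le_max lexx. Qed.
Lemma le_maxr x y : (y <= Order.max x y)%O. Proof. by rewrite le_max lexx orbT. Qed.

End MinMax.

Definition seglen (a b : LC) : LC := Order.max 0 (b - a).

Lemma seglen_ge0 a b : 0 <= seglen a b. Proof. exact: le_maxl. Qed.
Lemma seglen_ge a b : b - a <= seglen a b. Proof. exact: le_maxr. Qed.

Lemma seglen_id a b : a <= b -> seglen a b = b - a.
Proof. by move=> h; rewrite /seglen max_r // LC_subr_ge0. Qed.

Lemma seglen0 a b : b <= a -> seglen a b = 0.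
Proof. by move=> h; rewrite /seglen max_l // -LC_oppr_ge0 opprB LC_subr_ge0. Qed.

Lemma seglen_le a b a' b' : a' <= a -> b <= b' -> seglen a b <= seglen a' b'.
Proof. by move=> h1 h2; apply: le_max2 => //; apply: LC_lerD; rewrite ?LC_lerN2. Qed.

Lemma maxBl_seglen (x y : LC) : Order.max x y - x = seglen x y.
Proof. by case: (leP x y) => h; [rewrite seglen_id|rewrite subrr seglen0 // ltW]. Qed.

Definition clamp (c e x : LC) : LC := Order.min (Order.max x c) e.

Lemma clamp_ge c e x : c <= e -> c <= clamp c e x.
Proof. by move=> ce; rewrite le_min le_maxr ce. Qed.
Lemma clamp_le c e x : clamp c e x <= e. Proof. exact: ge_minr. Qed.
Lemma clamp_mono c e x y : x <= y -> clamp c e x <= clamp c e y.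
Proof. by move=> h; apply: le_min2 => //; exact: le_max2. Qed.

Definition overlap (c e p q : LC) : LC := seglen (Order.max c p) (Order.min e q).

Lemma overlap_ge0 c e p q : 0 <= overlap c e p q. Proof. exact: seglen_ge0. Qed.

Lemma overlap_le_seglen c e p q : overlap c e p q <= seglen c e.
Proof. by apply: seglen_le; [exact: le_maxl|exact: ge_minl]. Qed.

Lemma overlap_empty c e p q : e < c -> overlap c e p q = 0.
Proof.
by move=> ec; apply: seglen0; apply: le_trans (ge_minl e q) (le_trans (ltW ec) (le_maxl c p)).
Qed.

Lemma overlap_clamp c e p q : c <= e -> overlap c e p q = seglen (clamp c e p) (clamp c e q).
Proof.
move=> ce; rewrite /overlap /clamp; case: (leP p e) => pe; last first.
  rewrite ?(min_r (ltW (lt_le_trans pe (le_maxl p c)))) !seglen0 ?ge_minr //.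
  exact: le_trans (ge_minl e q) (le_trans (ltW pe) (le_maxr c p)).
case: (leP c q) => cq; last first.
  rewrite ?(max_r (ltW cq)) (min_l ce) !seglen0 ?le_min ?le_maxr ?ce //.
  exact: le_trans (ge_minr e q) (le_trans (ltW cq) (le_maxl c p)).
have -> : Order.min (Order.max p c) e = Order.max p c by rewrite min_l // ge_max pe.
by rewrite ?(max_l cq) maxC minC.
Qed.

Lemma overlap_split c e p r q : p <= r -> r <= q ->
  overlap c e p q = overlap c e p r + overlap c e r q.
Proof.
move=> pr rq; case: (leP c e) => ce; last by rewrite !overlap_empty // addr0.
rewrite !overlap_clamp // !seglen_id ?clamp_mono //; last exact: le_trans pr rq.
lc_ring.
Qed.

Lemma overlap_split3 c e j1 j2 : c <= e -> j1 <= j2 ->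
  overlap c e c j1 + overlap c e j1 j2 + overlap c e j2 e = e - c.
Proof.
move=> ce j12; rewrite !overlap_clamp //.
have -> : clamp c e c = c by rewrite /clamp maxxx min_l.
have -> : clamp c e e = e by rewrite /clamp max_l // minxx.
rewrite !seglen_id ?clamp_ge ?clamp_le ?clamp_mono //; lc_ring.
Qed.

(* Cutting [a, b] out of [u, v], where [a, b] is [c, e] widened by [eta] on both sides and clipped
   to [u, v], removes at most the overlap of [c, e] with [u, v] plus [2 eta]. *)
Lemma widened_gap_le u v c e eta : u <= v -> 0 <= eta ->
  Order.max (Order.min v (Order.max u (c - eta))) (Order.min v (e + eta))
    - Order.min v (Order.max u (c - eta)) <= overlap c e u v + (eta + eta).
Proof.
move=> uv h; set a := Order.min v _; rewrite maxBl_seglen; set m := Order.min v (e + eta).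
case: (leP m a) => ma.
  by rewrite seglen0 // LC_addr_ge0 ?overlap_ge0 ?LC_addr_ge0.
rewrite seglen_id; last exact: ltW.
have ea : a = Order.max u (c - eta).
  have av : a < v := lt_le_trans ma (ge_minl _ _).
  rewrite /a min_r // leNgt; apply/negP => vX.
  by move: av; rewrite /a (min_l (ltW vX)) ltxx.
have mr : m <= Order.min e v + eta.
  case: (leP e v) => ev; first exact: ge_minr.
  by apply: le_trans (ge_minl _ _) _; rewrite LC_lerDl.
have al : Order.max c u - eta <= a.
  rewrite ea; case: (leP c u) => cu; last exact: le_maxr.
  by apply: (le_trans _ (le_maxl _ _)); rewrite LC_lerBl.
have al' : - a <= - (Order.max c u - eta) by rewrite LC_lerN2.
apply: le_trans (LC_lerD mr al') _.
have -> : Order.min e v + eta - (Order.max c u - eta) =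
          Order.min e v - Order.max c u + (eta + eta) by lc_ring.
by rewrite LC_lerD2r /overlap minC seglen_ge.
Qed.

Lemma lt_widened_left (u v c g x : LC) : 0 < g -> u < Order.min v (Order.max u (c - g)) ->
  x <= Order.min v (Order.max u (c - g)) -> x < c.
Proof.
move=> g0 ua xa; apply: le_lt_trans xa _.
have : Order.min v (Order.max u (c - g)) <= Order.max u (c - g) := ge_minr _ _.
by rewrite le_max leNgt ua /= => ac; apply: le_lt_trans ac _; rewrite LC_ltrBl.
Qed.

Lemma gt_widened_right (a v e g x : LC) : 0 < g -> Order.max a (Order.min v (e + g)) < v ->
  Order.max a (Order.min v (e + g)) <= x -> e < x.
Proof.
move=> g0 bv bx; apply: lt_le_trans _ bx.
have : Order.min v (e + g) <= Order.max a (Order.min v (e + g)) := le_maxr _ _.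
by rewrite ge_min leNgt bv /= => eb; apply: lt_le_trans _ eb; rewrite LC_ltrDl.
Qed.

Lemma split_slack (SL SR : nat -> LC) lL lR g :
  {homo SL : N N' / (N <= N')%N >-> N <= N'} ->
  {homo SR : N N' / (N <= N')%N >-> N <= N'} ->
  (forall N, SL N + SR N + (g + g) <= lL + lR) ->
  (forall N, SL N + g <= lL) \/ (forall N, SR N + g <= lR).
Proof.
move=> mL mR h; apply: contrapT => /not_orP[/existsNP[N1 /negP h1] /existsNP[N2 /negP h2]].
move: h1 h2; rewrite -!ltNge => h1 h2; pose N := maxn N1 N2.
have h1' : lL < SL N + g := lt_le_trans h1 (LC_lerD (mL _ _ (leq_maxl _ _)) (lexx _)).
have h2' : lR < SR N + g := lt_le_trans h2 (LC_lerD (mR _ _ (leq_maxr _ _)) (lexx _)).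
by have := LC_ltr_leD h1' (ltW h2'); rewrite ltNge -addrACA h.
Qed.

(** * A countable cover of an interval is at least as long as the interval *)

Section CoveredInterval.
Variables (c e : nat -> LC) (T j1 j2 : LC).
Hypothesis hT : LCseries (fun i => seglen (c i) (e i)) T.

Let len i := seglen (c i) (e i).
Let tail k := T - LCpsum len k.
Let radius k := tail k + delta k%:R.
Let ovl k u v N := LCpsum (fun i => overlap (c (k + i)%N) (e (k + i)%N) u v) N.

Lemma tail_ge0 k : 0 <= tail k.
Proof. by rewrite LC_subr_ge0; apply: LCseries_ge_psum hT => i; exact: seglen_ge0. Qed.

Lemma radius_cvg0 : cvg_agree (fun n => radius n + radius n) 0.
Proof.
have tail0 : cvg_agree tail 0.
  move: hT => /LCcvgP h q; have [N hN] := h q; exists N => n hn p hp.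
  by rewrite lcfB -(hN n hn p hp) subrr lcf0.
have := cvg_agreeD (cvg_agreeD tail0 delta_nat_cvg0) (cvg_agreeD tail0 delta_nat_cvg0).
by rewrite !addr0.
Qed.

Lemma ovl0 k u v : ovl k u v 0 = 0. Proof. by []. Qed.

Lemma ovl_mono k u v : {homo ovl k u v : N N' / (N <= N')%N >-> N <= N'}.
Proof. by move=> N N'; apply: LCpsum_mono => i; exact: overlap_ge0. Qed.

Lemma ovl_le_tail k u v N : ovl k u v N <= tail k.
Proof.
apply: le_trans (LCpsum_le N (fun i => overlap_le_seglen (c (k + i)%N) (e (k + i)%N) u v)) _.
rewrite -(LC_lerD2l (LCpsum len k)) [_ + (T - _)]addrC subrK -LCpsum_shift.
by apply: LCseries_ge_psum hT => i; exact: seglen_ge0.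
Qed.

Lemma ovl_step k u v N : ovl k u v N.+1 = overlap (c k) (e k) u v + ovl k.+1 u v N.
Proof.
rewrite /ovl -add1n LCpsum_shift /= LCadd0 addn0.
by congr (_ + _); congr LCpsum; apply: funext => i; rewrite addnA addn1.
Qed.

Record nest := Nest { nest_idx : nat; nest_lo : LC; nest_hi : LC; nest_slack : LC }.

Definition nest_inv (s : nest) :=
  [/\ j1 < nest_lo s, nest_lo s <= nest_hi s, nest_hi s < j2, 0 < nest_slack s &
   (forall i x, (i < nest_idx s)%N -> nest_lo s <= x -> x <= nest_hi s ->
      ~ (c i <= x /\ x <= e i)) /\
   forall N, ovl (nest_idx s) (nest_lo s) (nest_hi s) N + nest_slack s
             <= nest_hi s - nest_lo s].

Definition nest_next (s s' : nest) :=
  [/\ nest_inv s', nest_idx s' = (nest_idx s).+1, nest_lo s <= nest_lo s',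
      nest_hi s' <= nest_hi s &
      nest_hi s' - nest_lo s' <= radius (nest_idx s') + radius (nest_idx s')].

(* Shrinking the new interval to length [2 (tail + slack)] keeps the slack, as the remaining
   intervals cover at most [tail] of anything. *)
Lemma nest_next_within (s : nest) p q g :
  nest_inv s -> nest_lo s <= p -> q <= nest_hi s -> 0 < g -> g <= delta (nest_idx s).+1%:R ->
  (forall N, ovl (nest_idx s).+1 p q N + g <= q - p) ->
  (forall x, p <= x -> x <= q -> ~ (c (nest_idx s) <= x /\ x <= e (nest_idx s))) ->
  exists s', nest_next s s'.
Proof.
case: s => k u v g0 [/= j1u uv vj2 _ [avoid _]] up qv g_gt0 gd hS hq.
have avoid' i x : (i < k.+1)%N -> p <= x -> x <= q -> ~ (c i <= x /\ x <= e i).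
  rewrite ltnS leq_eqVlt => /orP[/eqP->|ik] px xq; first exact: hq.
  by apply: avoid => //; [exact: le_trans up px|exact: le_trans xq qv].
set t := tail k.+1 + g.
have tr : t <= radius k.+1 by rewrite /t /radius LC_lerD2l.
have t0 : 0 <= t by rewrite LC_addr_ge0 ?tail_ge0 //; exact: ltW.
have r2 : t <= radius k.+1 + radius k.+1.
  by apply: (le_trans tr); rewrite LC_lerDl; exact: le_trans t0 tr.
case: (leP (q - p) (t + t)) => hqp.
  have pq : p <= q.
    by rewrite -LC_subr_ge0; apply: le_trans (hS 0%N); rewrite ovl0 add0r; exact: ltW.
  exists (Nest k.+1 p q g); split=> //=; last exact: le_trans hqp (LC_lerD tr tr).
  by split=> //; [exact: lt_le_trans j1u up|exact: le_lt_trans qv vj2].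
have tq : p + t <= q.
  rewrite -(LC_lerD2r (- p)) addrAC subrr add0r; apply: le_trans (ltW hqp).
  by rewrite LC_lerDl.
exists (Nest k.+1 p (p + t) g); split=> //=.
- split=> //.
  + exact: lt_le_trans j1u up.
  + by rewrite LC_lerDl.
  + exact: le_lt_trans tq (le_lt_trans qv vj2).
  + split=> [i x hi px xt|N]; first by apply: avoid' => //; exact: le_trans xt tq.
    by rewrite (addrC p t) addrK /t LC_lerD2r; exact: ovl_le_tail.
- exact: le_trans tq qv.
- by rewrite (addrC p t) addrK.
Qed.

(* The [k]-th interval, widened by [g'], is cut out of [[u, v]]; the slack budget forces one of
   the two remaining pieces to keep slack [g']. *)
Lemma nest_step (s : nest) : nest_inv s -> exists s', nest_next s s'.
Proof.
case: s => k u v g Hinv; have := Hinv; rewrite /nest_inv /= => -[j1u uv vj2 g0 [avoid hS]].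
set g' := Order.min (LChalf (LChalf g)) (delta k.+1%:R).
have g'0 : 0 < g' by rewrite lt_min !LChalf_gt0 // delta_gt0.
have g'd : g' <= delta k.+1%:R := ge_minr _ _.
have g'4 : g' + g' + (g' + g') <= g.
  have hg : g' <= LChalf (LChalf g) := ge_minl _ _.
  have eg : g = LChalf (LChalf g) + LChalf (LChalf g) + (LChalf (LChalf g) + LChalf (LChalf g)).
    by rewrite !LChalfK.
  by rewrite [X in _ <= X]eg; apply: LC_lerD; apply: LC_lerD.
set a := Order.min v (Order.max u (c k - g')).
set b := Order.max a (Order.min v (e k + g')).
have ua : u <= a by rewrite le_min uv le_maxl.
have av : a <= v := ge_minl _ _.
have ab : a <= b := le_maxl _ _.
have bv : b <= v by rewrite /b ge_max av ge_minl.
have gap : b - a <= overlap (c k) (e k) u v + (g' + g') := widened_gap_le _ _ uv (ltW g'0).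
have key N : ovl k.+1 u a N + ovl k.+1 b v N + (g' + g') <= (a - u) + (v - b).
  have hN := hS N.+1; rewrite ovl_step in hN.
  have spl : ovl k.+1 u a N + ovl k.+1 b v N <= ovl k.+1 u v N.
    rewrite /ovl -LCpsumD; apply: LCpsum_le => i.
    rewrite (overlap_split _ _ ua (le_trans ab bv)) (overlap_split _ _ ab bv) LC_lerD2l.
    by rewrite addrC LC_lerDl overlap_ge0.
  rewrite -(LC_lerD2r (overlap (c k) (e k) u v + (g' + g'))).
  apply: (@le_trans _ _ (ovl k.+1 u v N + overlap (c k) (e k) u v + g)).
    have -> : ovl k.+1 u a N + ovl k.+1 b v N + (g' + g') + (overlap (c k) (e k) u v + (g' + g'))
      = ovl k.+1 u a N + ovl k.+1 b v N + overlap (c k) (e k) u v + (g' + g' + (g' + g')).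
      by lc_ring.
    by apply: LC_lerD => //; apply: LC_lerD.
  rewrite (addrC (ovl _ _ _ _)); apply: le_trans hN _.
  have -> : v - u = a - u + (v - b) + (b - a) by lc_ring.
  by rewrite LC_lerD2l.
case: (split_slack (ovl_mono k.+1 u a) (ovl_mono k.+1 b v) key) => hP.
- apply: (nest_next_within (s := Nest k u v g) (p := u) (q := a) (g := g')) => //=.
  move=> x ux xa [cx _].
  have ua' : u < a by rewrite -LC_subr_gt0; apply: lt_le_trans (hP 0%N); rewrite ovl0 add0r.
  by move: cx; rewrite leNgt (lt_widened_left g'0 ua' xa).
- apply: (nest_next_within (s := Nest k u v g) (p := b) (q := v) (g := g')) => //=.
    exact: le_trans ua ab.
  move=> x bx xv [_ xe].
  have bv' : b < v by rewrite -LC_subr_gt0; apply: lt_le_trans (hP 0%N); rewrite ovl0 add0r.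
  by move: xe; rewrite leNgt (gt_widened_right g'0 bv' bx).
Qed.

Lemma nest_init : T < j2 - j1 -> exists2 s, nest_inv s & nest_idx s = 0%N.
Proof.
move=> hlt; set g := LChalf (LChalf (j2 - j1 - T)).
have g0 : 0 < g by rewrite !LChalf_gt0 // LC_subr_gt0.
have T0 : 0 <= T by apply: LCseries_ge0 hT => i; exact: seglen_ge0.
have width : j2 - g - (j1 + g) = T + (g + g).
  have eg : g + g + (g + g) = j2 - j1 - T by rewrite !LChalfK.
  have -> : j2 - g - (j1 + g) = (j2 - j1 - T) + T - (g + g) by lc_ring.
  by rewrite -eg; lc_ring.
exists (Nest 0 (j1 + g) (j2 - g) g) => //; split=> /=.
- by rewrite LC_ltrDl.
- by rewrite -LC_subr_ge0 width LC_addr_ge0 // LC_addr_ge0 //; exact: ltW.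
- by rewrite LC_ltrBl.
- exact: g0.
- split=> [i x|N]; first by rewrite ltn0.
  rewrite width; apply: le_trans (LC_lerD (ovl_le_tail 0 _ _ N) (lexx g)) _.
  by rewrite /tail LCpsum0 subr0 LC_lerD2l LC_lerDl; exact: ltW.
Qed.

Lemma nest_chain s0 : nest_inv s0 -> nest_idx s0 = 0%N -> exists F : nat -> nest,
  forall n, [/\ nest_inv (F n), nest_idx (F n) = n & nest_next (F n) (F n.+1)].
Proof.
move=> I0 k0; have /choice [G hG] : forall s, exists s', nest_inv s -> nest_next s s'.
  move=> s; case: (pselect (nest_inv s)) => h; last by exists s.
  by have [s' hs'] := nest_step h; exists s'.
suff H n : nest_inv (iter n G s0) /\ nest_idx (iter n G s0) = n.
  by exists (fun n => iter n G s0) => n; have [In kn] := H n; split=> //; exact: hG.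
by elim: n => [|n [In kn]] //=; have [I' k' _ _ _] := hG _ In; rewrite k' kn.
Qed.

(* The left ends are Cauchy because the lengths are bounded by [2 radius], which tends to 0. *)
Lemma nest_limit (F : nat -> nest) :
  (forall n, [/\ nest_inv (F n), nest_idx (F n) = n & nest_next (F n) (F n.+1)]) ->
  exists P, forall n, nest_lo (F n) <= P /\ P <= nest_hi (F n).
Proof.
move=> hF; pose U n := nest_lo (F n); pose V n := nest_hi (F n).
have UV n : U n <= V n by have [[_ h _ _ _] _ _] := hF n.
have Umono : {homo U : n m / (n <= m)%N >-> n <= m}.
  by apply: homo_leq => [x|y x z|n]; [exact: lexx|exact: le_trans|have [_ _ []] := hF n].
have Vmono : {homo V : n m / (n <= m)%N >-> m <= n}.
  apply: homo_leq => [x|y x z xy yz|n]; [exact: lexx|exact: le_trans yz xy|].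
  by have [_ _ []] := hF n.
have len0 : cvg_agree (fun n => V n.+1 - U n.+1) 0.
  apply: cvg_agree0_squeeze (cvg_agreeS radius_cvg0) => [n|n]; first by rewrite LC_subr_ge0.
  by have [_ _ [_ _ _ _]] := hF n; have [_ -> _] := hF n.+1.
have cau : cauchy_agree U.
  move=> q; have [N hN] := len0 q; exists N.+1.
  suff aux n m : (N.+1 <= n)%N -> (n <= m)%N -> agree (U m) (U n) q.
    by move=> n m hn hm; case: (leqP n m) => h; [exact/agree_sym/aux|exact: aux (ltnW h)].
  move=> hn hm; have h0 : agree (U m - U n) 0 q.
    apply: (agree0_squeeze (y := V n - U n)); first by rewrite LC_subr_ge0 Umono.
      by rewrite LC_lerD2r (le_trans (UV m)) ?Vmono.
    by case: n hn hm => // n hn hm; exact: hN.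
  by move=> p hp; move: (h0 p hp); rewrite lcfB lcf0 => /eqP; rewrite subr_eq0 => /eqP.
have [P hP] := cauchy_agree_cvg cau; exists P => n; split.
  by apply: (cvg_agree_ge (N0 := n) hP) => m; exact: Umono.
by apply: (cvg_agree_le (N0 := n) hP) => m hm; exact: le_trans (UV m) (Vmono _ _ hm).
Qed.

Lemma covered_len_le :
  (forall x, j1 < x -> x < j2 -> exists i, c i <= x /\ x <= e i) -> j2 - j1 <= T.
Proof.
move=> cov; rewrite leNgt; apply/negP => /nest_init [s0 I0 k0].
have [F hF] := nest_chain I0 k0; have [P hP] := nest_limit hF.
have [[j1U _ Vj2 _ _] _ _] := hF 0%N.
have [i [ciP Pei]] : exists i, c i <= P /\ P <= e i.
  by apply: cov; [exact: lt_le_trans j1U (hP 0%N).1|exact: le_lt_trans (hP 0%N).2 Vj2].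
have [[_ _ _ _ [avoid _]] ki _] := hF i.+1.
by apply: (avoid i P) => //; [rewrite ki|case: (hP i.+1)..].
Qed.

End CoveredInterval.

Lemma iset_bounds (J : LCinterval) x : iset J x -> ileft J <= x /\ x <= iright J.
Proof.
case: J => a b [] ab; rewrite /iset /=.
- by move=> [/LCleP h1 /LCleP h2].
- by move=> [/LCleP h1 /LCltP h2]; split=> //; exact: ltW.
- by move=> [/LCltP h1 /LCleP h2]; split=> //; exact: ltW.
- by move=> [/LCltP h1 /LCltP h2]; split; exact: ltW.
Qed.

Lemma iset_interior (J : LCinterval) x : ileft J < x -> x < iright J -> iset J x.
Proof.
case: J => a b [] ab; rewrite /iset /= => h1 h2.
- by split; apply/LCleP; exact: ltW.
- by split; [apply/LCleP; exact: ltW|apply/LCltP].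
- by split; [apply/LCltP|apply/LCleP; exact: ltW].
- by split; apply/LCltP.
Qed.

Lemma ileft_lt (J : LCinterval) : ileft J < iright J.
Proof. exact/LCltP/iltP. Qed.

Lemma ilenE (J : LCinterval) : ilen J = iright J - ileft J. Proof. by []. Qed.

Lemma ilen_seglen (J : LCinterval) : ilen J = seglen (ileft J) (iright J).
Proof. by rewrite seglen_id // ltW // ileft_lt. Qed.

Lemma padded_lt (a b w : LC) : 0 < w -> LClt a (Order.max a b + w).
Proof. by move=> w0; apply/LCltP; apply: le_lt_trans (le_maxl a b) _; rewrite LC_ltrDl. Qed.

(* nondegenerate even when [[a, b]] is empty *)
Definition padded_itv (a b w : LC) (w0 : 0 < w) : LCinterval := MkInterval CC (padded_lt a b w0).

Lemma padded_itv_len a b w (w0 : 0 < w) : ilen (padded_itv a b w0) = seglen a b + w.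
Proof. by rewrite ilenE /= -maxBl_seglen; lc_ring. Qed.

Lemma padded_itv_mem a b w (w0 : 0 < w) x : a <= x -> x <= b -> iset (padded_itv a b w0) x.
Proof.
move=> ax xb; split; apply/LCleP => //=; apply: le_trans (le_trans xb (le_maxr a b)) _.
by rewrite LC_lerDl ltW.
Qed.

Lemma cover_with_sum_sub A B S s : A `<=` B -> cover_with_sum B S s -> cover_with_sum A S s.
Proof. by move=> AB [BS hs]; split=> //; exact: subset_trans BS. Qed.

Lemma cover_with_sumU A B S1 S2 s1 s2 : cover_with_sum A S1 s1 -> cover_with_sum B S2 s2 ->
  cover_with_sum (A `|` B) (interleave S1 S2) (s1 + s2).
Proof.
move=> [AS1 hs1] [BS2 hs2]; split.
  move=> x [/AS1 [k _ hk]|/BS2 [k _ hk]].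
    by exists k.*2 => //; rewrite /interleave odd_double half_double.
  by exists k.*2.+1 => //; rewrite /interleave /= odd_double /= uphalf_double.
have -> : (fun n => ilen (interleave S1 S2 n)) =
          interleave (fun n => ilen (S1 n)) (fun n => ilen (S2 n)).
  by apply: funext => n; rewrite /interleave; case: (odd n).
exact: LCseries_interleave.
Qed.

(* Paddings [delta (q0 + 1 + k)] all vanish up to [q0], the leading exponent of [rho]. *)
Lemma small_padding (rho : LC) : 0 < rho ->
  exists w : nat -> LC, (forall k, 0 < w k) /\ exists2 W, LCseries w W & W + W < rho.
Proof.
move=> /LCltP [q0 [hq0 eq0]]; exists (fun k => delta (q0 + 1 + k%:R)).
split=> [k|]; first exact: delta_gt0.
have [W hW] := LCseries_of_terms0 (delta_shift_cvg0 (q0 + 1)); exists W => //.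
have Wq0 : agree W 0 q0.
  apply: (LCseries_agree0 hW) => k p hp; rewrite deltaE lcf0; case: eqP => // ep.
  have : q0 < q0 + 1 + k%:R by rewrite -addrA ltrDl ltr_pwDl.
  by rewrite -ep ltNge hp.
apply/LCltP; exists q0; split; first by move: hq0; rewrite lcfD Wq0 // !lcf0 addr0.
by move=> p hp; have hpq := ltW hp; rewrite lcfD Wq0 // -(eq0 p hp) lcf0 addr0.
Qed.

Section Removal.
Variables (B : set LC) (C : nat -> LCinterval) (T : LC) (J : LCinterval) (rho : LC).
Hypotheses (hC : cover_with_sum B C T) (hJ : iset J `<=` B) (rho0 : 0 < rho).

Let c k := ileft (C k).
Let e k := iright (C k).
Let j1 := ileft J.
Let j2 := iright J.

Lemma overlap_series (p q : nat -> LC) :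
  exists s, LCseries (fun k => overlap (c k) (e k) (p k) (q k)) s.
Proof.
apply: LCseries_of_terms0; case: hC => _ /LCseries_terms0.
apply: cvg_agree0_squeeze => k; first exact: overlap_ge0.
by rewrite ilen_seglen; exact: overlap_le_seglen.
Qed.

(* Each [C k] splits into its parts left of, inside and right of [J]; the inner parts cover the
   interior of [J], so their lengths add up to at least [ilen J]. The outer parts, padded to
   nondegenerate intervals, cover [B `\` iset J]. *)
Lemma removal : exists D s, cover_with_sum (B `\` iset J) D s /\ s <= T - ilen J + rho.
Proof.
case: hC => hcov hser.
have ce k : c k <= e k := ltW (ileft_lt (C k)).
have j12 : j1 <= j2 := ltW (ileft_lt J).
have [SL hSL] := overlap_series c (fun=> j1).
have [SM hSM] := overlap_series (fun=> j1) (fun=> j2).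
have [SR hSR] := overlap_series (fun=> j2) e.
have hsum : SL + SM + SR = T.
  apply: LCseries_unique (LCseriesD (LCseriesD hSL hSM) hSR) _.
  by under eq_fun do rewrite overlap_split3 //.
have hcore : ilen J <= SM.
  apply: (covered_len_le (c := fun k => Order.max (c k) j1) (e := fun k => Order.min (e k) j2) hSM).
  move=> x h1 h2; have [k _ /iset_bounds [ck ek]] := hcov x (hJ (iset_interior h1 h2)).
  by exists k; rewrite ge_max le_min ck ek (ltW h1) (ltW h2).
have [w [w0 [W hW WW]]] := small_padding rho0.
pose L k := padded_itv (c k) (Order.min (e k) j1) (w0 k).
pose R k := padded_itv (Order.max (c k) j2) (e k) (w0 k).
exists (interleave L R), ((SL + W) + (SR + W)); split.
  apply: (cover_with_sum_sub _ (cover_with_sumU (A := \bigcup_k iset (L k))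
                                                 (B := \bigcup_k iset (R k)) _ _)).
  - move=> x [Bx nJx]; have [k _ /iset_bounds [ck ek]] := hcov x Bx.
    case: (leP x j1) => h1.
      by left; exists k => //; apply: padded_itv_mem => //; rewrite le_min ek h1.
    case: (leP j2 x) => h2.
      by right; exists k => //; apply: padded_itv_mem => //; rewrite ge_max ck h2.
    by case: nJx; exact: iset_interior.
  - split=> //; under eq_fun do rewrite padded_itv_len.
    by apply: LCseriesD hW; under eq_fun do rewrite -[c _]maxxx.
  - split=> //; under eq_fun do rewrite padded_itv_len.
    by apply: LCseriesD hW; under eq_fun do rewrite -[e _]minxx.
have -> : SL + W + (SR + W) = T - SM + (W + W) by rewrite -hsum; lc_ring.
by apply: LC_lerD; [rewrite LC_lerD2l LC_lerN2|exact: ltW].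
Qed.

End Removal.

(** * Adding disjoint intervals to an outer measurable set *)

Section AddIntervals.
Variables (A : set LC) (I : nat -> LCinterval).
Hypotheses (disjI : forall m n, m <> n -> iset (I m) `&` iset (I n) = set0)
           (disjAI : forall n, A `&` iset (I n) = set0).

Let tailU N := A `|` [set x | exists2 m, (N <= m)%N & iset (I m) x].

Lemma cover_remove_intervals C s : cover_with_sum (A `|` \bigcup_n iset (I n)) C s ->
  forall N r, 0 < r -> exists D s',
    cover_with_sum (tailU N) D s' /\ s' <= s - LCpsum (fun n => ilen (I n)) N + r.
Proof.
move=> hC; elim=> [|N IH] r r0.
  exists C, s; split; last by rewrite LCpsum0 subr0 LC_lerDl ltW.
  by apply: cover_with_sum_sub hC => x [Ax|[m _ hm]]; [left|right; exists m].
have [D [s' [hD hs']]] := IH _ (LChalf_gt0 r0).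
have INsub : iset (I N) `<=` tailU N by move=> x hx; right; exists N.
have [D' [s'' [hD' hs'']]] := removal hD INsub (LChalf_gt0 r0).
exists D', s''; split.
  apply: cover_with_sum_sub hD' => x [Ax|[m hm hx]].
    by split=> [|INx]; [left|have : (A `&` iset (I N)) x by []; rewrite disjAI].
  split=> [|INx]; first by right; exists m => //; exact: ltnW.
  have mN : m <> N by move=> emN; rewrite emN ltnn in hm.
  by have : (iset (I m) `&` iset (I N)) x by []; rewrite disjI.
apply: le_trans hs'' _; rewrite LCpsumE.
have -> : s - (LCpsum (fun n => ilen (I n)) N + ilen (I N)) + r =
          s - LCpsum (fun n => ilen (I n)) N + LChalf r - ilen (I N) + LChalf r.
  by rewrite -[in LHS](LChalfK r); lc_ring.
by apply: LC_lerD => //; apply: LC_lerD.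
Qed.

Variables (mA sI : LC).
Hypotheses (hA : outer_measure_is A mA) (hsI : LCseries (fun n => ilen (I n)) sI).

Lemma union_cover_sum_ge s : cover_sums (A `|` \bigcup_n iset (I n)) s -> mA + sI <= s.
Proof.
move=> [C hC]; rewrite leNgt; apply/negP => hlt.
set r := LChalf (mA + sI - s).
have r0 : 0 < r by rewrite LChalf_gt0 // LC_subr_gt0.
have [q hq] : exists q, forall x, agree x 0 q -> LClt x r by apply: gt_agree_stable; apply/LCltP.
have [N hN] := proj1 (LCcvgP _ _) hsI q.
have small : sI - LCpsum (fun n => ilen (I n)) N < r.
  by apply/LCltP; apply: hq => p hp; rewrite lcfB (hN N (leqnn _) p hp) subrr lcf0.
have [D [s' [hD hs']]] := cover_remove_intervals hC N r0.
have /LCleP mAs' : LCle mA s'.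
  by case: hA => lb _; apply: lb; exists D; apply: cover_with_sum_sub hD => x Ax; left.
suff : s' < mA by rewrite ltNge mAs'.
apply: le_lt_trans hs' _.
have -> : mA = s - sI + (r + r) by rewrite /r LChalfK; lc_ring.
have -> : s - LCpsum (fun n => ilen (I n)) N + r =
          s - sI + (sI - LCpsum (fun n => ilen (I n)) N) + r by lc_ring.
by rewrite -addrA LC_ltrD2l LC_ltrD2r.
Qed.

Lemma union_cover_sum_glb m :
  (forall s, cover_sums (A `|` \bigcup_n iset (I n)) s -> LCle m s) -> m <= mA + sI.
Proof.
move=> hm; rewrite -(LC_lerD2r (- sI)) addrK.
case: hA => _ glb; apply/LCleP; apply: glb => s [S hS]; apply/LCleP.
rewrite -(LC_lerD2r sI) subrK; apply/LCleP; apply: hm.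
by exists (interleave S I); apply: cover_with_sumU hS _; split=> // x.
Qed.

End AddIntervals.

Theorem mainTheorem7 (A : set LC) (mA : LC) (I : nat -> LCinterval) :
  outer_measure_is A mA ->
  (forall m n : nat, m <> n -> iset (I m) `&` iset (I n) = set0) ->
  (forall n : nat, A `&` iset (I n) = set0) ->
  LCcvg (fun n => ilen (I n)) LC0 ->
  exists sI : LC,
    LCseries (fun n => ilen (I n)) sI /\
    outer_measure_is (A `|` \bigcup_n iset (I n)) (LCadd mA sI).
Proof.
move=> hA disjI disjAI /LCcvgP /LCseries_of_terms0 [sI hsI].
exists sI; split=> //; split=> [s hs|m hm]; apply/LCleP.
- exact (union_cover_sum_ge disjI disjAI hA hsI hs).
- exact (union_cover_sum_glb hA hsI hm).
Qed.
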